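(* Let $q$ be a prime power and let $a,b\in\mathbb{F}_q^{*}$ be such that the multiplicative order of $a$ divides the multiplicative order of $b$. Let $n$ be a positive integer such that $\gcd(n,q)=\gcd(n,q-1)=1$. Then the families of $a$-constacyclic and $b$-constacyclic codes of length $n$ over $\mathbb{F}_q$ are monomially equivalent.
   Context: For $c\in\mathbb{F}_q^*$, a linear code $C\subseteq\mathbb{F}_q^n$ is called $c$-constacyclic if for every codeword $(c_0,c_1,\ldots,c_{n-1})\in C$ we also have $(c\, c_{n-1},c_0,\ldots,c_{n-2})\in C$; equivalently, such codes correspond to ideals of $\mathbb{F}_q[x]/\langle x^n-c\rangle$. An isometry of linear codes is an $\mathbb{F}_q$-linear isomorphism preserving Hamming distance (equivalently, a map given by a monomial matrix). For $a,b\in\mathbb{F}_q^*$, the families of $a$-constacyclic and $b$-constacyclic codes of length $n$ over $\mathbb{F}_q$ are called monomially equivalent if there is a one-to-one correspondence between the set of $a$-constacyclic codes and the set of $b$-constacyclic codes of length $n$ given by an isometry of linear codes. *)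

From HB Require Import structures.
From mathcomp Require Import all_boot all_order all_algebra all_fingroup all_field.
Set Implicit Arguments. Unset Strict Implicit. Unset Printing Implicit Defensive.
Import GRing.Theory.
Local Open Scope ring_scope.

(* Linear codes of length n over F are subspaces of 'rV[F]_n. *)

(* constacyclic shift: (v_0,...,v_{n-1}) |-> (c v_{n-1}, v_0, ..., v_{n-2}) *)
Definition cshift (F : fieldType) (n : nat) (c : F) (v : 'rV[F]_n) : 'rV[F]_n :=
  \row_(i < n) (if (i : nat) == 0%N then c * v 0 (ord_pred i) else v 0 (ord_pred i)).

Definition constacyclic (F : fieldType) (n : nat) (c : F) (C : {vspace 'rV[F]_n}) : Prop :=
  forall v, v \in C -> cshift c v \in C.

Definition monomial_mx (F : fieldType) (n : nat) (M : 'M[F]_n) : Prop :=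
  exists (s : 'S_n) (d : 'I_n -> F),
    (forall i, d i != 0) /\ M = \matrix_(i, j) (if s i == j then d i else 0).

Definition code_image (F : fieldType) (n : nat) (M : 'M[F]_n) (C : {vspace 'rV[F]_n})
  : {vspace 'rV[F]_n} := (linfun (fun v : 'rV[F]_n => v *m M) @: C)%VS.

(* The families of a- and b-constacyclic codes are monomially equivalent:
   some monomial map C |-> C M restricts to a bijection between them.
   (C |-> C M is injective on subspaces, so this amounts to:
   C is a-constacyclic iff C M is b-constacyclic.) *)
Definition monomially_equivalent (F : fieldType) (n : nat) (a b : F) : Prop :=
  exists M : 'M[F]_n, monomial_mx M /\
    forall C : {vspace 'rV[F]_n}, constacyclic a C <-> constacyclic b (code_image M C).

From HB Require Import structures.
From mathcomp Require Import all_boot all_order all_algebra all_fingroup all_field.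
From mathcomp Require Import cyclic ring.
Set Implicit Arguments. Unset Strict Implicit. Unset Printing Implicit Defensive.
Import GRing.Theory FinRing.Theory.
Local Open Scope ring_scope.

(* Since gcd(n, q - 1) = 1, raising to the n-th power is a bijection of the
   group F^* of order q - 1, so a = b l^n for some nonzero l.  Rescaling
   coordinate j by l^j then conjugates the a-constacyclic shift into l^-1 times the
   b-constacyclic shift, so the diagonal monomial map diag(1, l, ..., l^(n-1))
   sends the a-constacyclic codes exactly onto the b-constacyclic ones. *)

Lemma expg_invnK (gT : finGroupType) (G : {group gT}) k x :
  coprime #|G| k -> x \in G -> (x ^+ expg_invn G k ^+ k = x)%g.
Proof. by move=> coGk Gx; rewrite expgnAC expgK. Qed.

Lemma finField_unit_root (F : finFieldType) n (u : {unit F}) :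
  coprime n #|F|.-1 -> exists w : {unit F}, val w ^+ n = val u.
Proof.
rewrite coprime_sym -card_finField_unit => coFn.
by exists (u ^+ expg_invn [set: {unit F}] n)%g; rewrite -val_unitX expg_invnK ?inE.
Qed.

Lemma val_ord_pred n (i : 'I_n) :
  val (ord_pred i) = (if val i == 0 then n.-1 else (val i).-1)%N.
Proof.
case: i => [[|i] lt_in] /=; first by rewrite add0n modn_small // prednK.
by rewrite modnDr modn_small // ltnW.
Qed.

Lemma monomial_diag_mx (F : fieldType) n (d : 'rV[F]_n) :
  (forall i, d 0 i != 0) -> monomial_mx (diag_mx d).
Proof.
move=> d_neq0; exists 1%g, (d 0); split=> //.
apply/matrixP => i j; rewrite !mxE perm1.
by case: (i == j); rewrite ?mulr1n ?mulr0n.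
Qed.

Section CodeImage.

Variables (F : fieldType) (n : nat) (M : 'M[F]_n).

Lemma mem_code_image (C : {vspace 'rV[F]_n}) v :
  v \in C -> v *m M \in code_image M C.
Proof. by move=> Cv; rewrite -[v *m M](lfunE (mulmxr M)) memv_img. Qed.

Lemma code_imageP (C : {vspace 'rV[F]_n}) w :
  reflect (exists2 v, v \in C & w = v *m M) (w \in code_image M C).
Proof.
by apply: (iffP memv_imgP) => -[v Cv ->]; exists v; rewrite ?(lfunE (mulmxr M)).
Qed.

Hypothesis M_unit : M \in unitmx.

Lemma constacyclic_code_image (a b s : F) :
  s != 0 -> (forall v, cshift b (v *m M) = s *: (cshift a v *m M)) ->
  forall C, constacyclic a C <-> constacyclic b (code_image M C).
Proof.
move=> s_neq0 shiftM C; split=> [Ca _ /code_imageP[v Cv ->] | Cb v Cv].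
  by rewrite shiftM memvZ // mem_code_image // Ca.
have := Cb _ (mem_code_image Cv); rewrite shiftM => /(memvZ s^-1).
rewrite scalerA mulVf // scale1r => /code_imageP[u Cu /(can_inj (mulmxK M_unit)) ->].
exact: Cu.
Qed.

End CodeImage.

Definition pow_diag_mx (F : fieldType) n (l : F) : 'M[F]_n :=
  diag_mx (\row_(j < n) l ^+ j).

Lemma cshift_pow_diag_mx (F : fieldType) n (a b l : F) (v : 'rV[F]_n) :
  l != 0 -> a = b * l ^+ n ->
  cshift b (v *m pow_diag_mx n l) = l^-1 *: (cshift a v *m pow_diag_mx n l).
Proof.
move=> l_neq0 ->; apply/matrixP => i j.
rewrite /pow_diag_mx !mul_mx_diag !mxE val_ord_pred.
have exprSpred k : (0 < k)%N -> l ^+ k = l * l ^+ k.-1.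
  by move=> k_gt0; rewrite -exprS prednK.
case: eqP => [j0 | /eqP j_neq0].
  rewrite j0 expr0 mulr1 (exprSpred n); last exact: leq_ltn_trans (ltn_ord j).
  by field.
by rewrite (exprSpred j) ?lt0n //; field.
Qed.

Lemma monomially_equivalent_root (F : fieldType) n (a b l : F) :
  l != 0 -> a = b * l ^+ n -> monomially_equivalent n a b.
Proof.
move=> l_neq0 def_a; exists (pow_diag_mx n l); split.
  by apply: monomial_diag_mx => j; rewrite mxE expf_neq0.
apply: (constacyclic_code_image _ (invr_neq0 l_neq0)).
  by rewrite unitmxE det_diag unitfE; apply/prodf_neq0 => j _; rewrite mxE expf_neq0.
by move=> v; apply: cshift_pow_diag_mx.
Qed.

Theorem corollary3p2 (F : finFieldType) (a b : {unit F}) (n : nat) :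
  (#[a]%g %| #[b]%g)%N ->
  (0 < n)%N ->
  gcdn n #|F| = 1%N ->
  gcdn n #|F|.-1 = 1%N ->
  monomially_equivalent n (val a) (val b).
Proof.
move=> _ _ _ /eqP co_n_q1.
have [l def_l] := finField_unit_root (b^-1 * a)%g co_n_q1.
apply: (monomially_equivalent_root (l := val l)).
  by rewrite -unitfE (valP l).
by rewrite def_l val_unitM val_unitV mulVKf // -unitfE (valP b).
Qed.
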